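(* Let $(\mathcal M^-,\mathcal M^+)$ and $(\mathcal N^-,\mathcal N^+)$ be symbolic matrix bisystems satisfying FPCC. If they are properly strong shift equivalent, then the subshifts $\Lambda_\mathcal M$ and $\Lambda_\mathcal N$ presented by them are topologically conjugate.
   Context: Formal sums/specifications: $\mathfrak S_\Sigma$ = finite formal sums over a finite alphabet $\Sigma$; matrices over $C$ times matrices over $D$ give matrices over $C\cdot D=\{cd\}$; a specification $\phi$ is a bijection from a subset of one alphabet onto a subset of another, and $\mathcal A\overset{\phi}{\simeq}\mathcal A'$ means $\mathcal A'$ is obtained by replacing every symbol $a$ of $\mathcal A$ by $\phi(a)$; $\kappa(ab)=ba$. A symbolic matrix bisystem over $\Sigma^\pm$: $(\mathcal M^-_{l,l+1},\mathcal M^+_{l,l+1})_{l\ge0}$, $m(l)\times m(l+1)$ matrices over $\mathfrak S_{\Sigma^-}$ and $\mathfrak S_{\Sigma^+}$, no zero rows/columns, no symbol repeated within an entry or within a column, and $\mathcal M^-_{l,l+1}\mathcal M^+_{l+1,l+2}\overset{\kappa}{\simeq}\mathcal M^+_{l,l+1}\mathcal M^-_{l+1,l+2}$. FPCC: $m(0)=1$, $\Sigma^-=\Sigma^+=:\Sigma_\mathcal M$, and for every $l\ge1$, $j$, the words in $[\mathcal M^-_{0,1}\cdots\mathcal M^-_{l-1,l}](1,j)$ are exactly the reversals of the words in $[\mathcal M^+_{0,1}\cdots\mathcal M^+_{l-1,l}](1,j)$. Presented subshift $\Lambda_\mathcal M$: the unique subshift of $\Sigma_\mathcal M^{\mathbb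 Z}$ whose nonempty admissible words are exactly the words occurring in entries of the products $\mathcal M^+_{l,l+1}\mathcal M^+_{l+1,l+2}\cdots\mathcal M^+_{l+k-1,l+k}$ ($l\ge0,k\ge1$). Properly strong shift equivalence in 1-step between FPCC systems $(\mathcal M^\pm)$ over $\Sigma_\mathcal M$ and $(\mathcal N^\pm)$ over $\Sigma_\mathcal N$: alphabets $C,D$, specifications $\varphi:\Sigma_\mathcal M\to C\cdot D$, $\phi:\Sigma_\mathcal N\to D\cdot C$, sequences $c(l),d(l)$, matrices $\mathcal P_l$ ($c(l)\times d(l+1)$ over $C$), $\mathcal Q_l$ ($d(l)\times c(l+1)$ over $D$), $\mathcal X_l$ over $D$ ($d(l)\times d(l+1)$ for odd $l$, $c(l)\times c(l+1)$ for even $l$), $\mathcal Y_l$ over $C$ ($c(l)\times c(l+1)$ for odd $l$, $d(l)\times d(l+1)$ for even $l$), with for all $l\ge0$: $\mathcal M^+_{l,l+1}\overset{\varphi}{\simeq}\mathcal P_{2l}\mathcal Q_{2l+1}$, $\mathcal N^+_{l,l+1}\overset{\phi}{\simeq}\mathcal Q_{2l}\mathcal P_{2l+1}$, $\mathcal M^-_{l,l+1}\overset{\kappa\varphi}{\simeq}\mathcal X_{2l}\mathcal Y_{2l+1}$, $\mathcal N^-_{l,l+1}\overset{\kappa\phi}{\simeq}\mathcal Y_{2l}\mathcal X_{2l+1}$, $\mathcal Y_{2l+1}\mathcal P_{2l+2}\overset{\kappa}{\simeq}\mathcal P_{2l+1}\mathcal Y_{2l+2}$, $\mathcal X_{2l+1}\mathcal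 Q_{2l+2}\overset{\kappa}{\simeq}\mathcal Q_{2l+1}\mathcal X_{2l+2}$, $\mathcal X_{2l}\mathcal P_{2l+1}\overset{\kappa}{\simeq}\mathcal P_{2l}\mathcal X_{2l+1}$, $\mathcal Y_{2l}\mathcal Q_{2l+1}\overset{\kappa}{\simeq}\mathcal Q_{2l}\mathcal Y_{2l+1}$. Properly strong shift equivalence: a finite chain of such 1-step equivalences through FPCC symbolic matrix bisystems. *)

From HB Require Import structures.
From mathcomp Require Import all_boot all_order all_algebra.
From Stdlib Require Import Relations.
Set Implicit Arguments. Unset Strict Implicit. Unset Printing Implicit Defensive.
Import GRing.Theory.

(* Symbolic matrices.  A formal sum over an alphabet (or over words)   *)
(* is a finite list considered up to permutation (i.e. a multiset).    *)
(* A symbolic matrix is a function  row -> column -> formal sum; its   *)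
(* dimensions (rows, columns) are carried separately as nats, and only *)
(* entries (i, j) with i < rows, j < cols are meaningful.              *)

Definition smat (T : Type) := nat -> nat -> seq T.

(* Product of a matrix over A with a matrix over B, inner dimension n:  *)
(* a matrix over A.B = {ab} (pairs).                                   *)
Definition mulm (A B : Type) (n : nat) (X : smat A) (Y : smat B) : smat (A * B) :=
  fun i k => flatten [seq [seq (a, b) | a <- X i j, b <- Y j k] | j <- iota 0 n].

Definition kappa (A B : Type) (p : A * B) : B * A := (p.2, p.1).

(* A specification: a bijection from a subset of one alphabet onto a   *)
(* subset of another = partial injective map.                          *)
Definition spec_inj (A B : Type) (phi : A -> option B) : Prop :=
  forall a a' b, phi a = Some b -> phi a' = Some b -> a = a'.

Definition spec_eq (A : Type) (B : eqType) (phi : A -> option B)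
    (m n : nat) (X : smat A) (m' n' : nat) (Y : smat B) : Prop :=
  m = m' /\ n = n' /\
  forall i j, i < m -> j < n ->
    all (fun a => isSome (phi a)) (X i j) /\ perm_eq (pmap phi (X i j)) (Y i j).

Definition kspec (A B : Type) : A * B -> option (B * A) := fun p => Some (kappa p).

(* dims m : nat -> nat ;  Mm l, Mp l : the m(l) x m(l+1) matrices      *)
(* M^-_{l,l+1}, M^+_{l,l+1}.                                           *)

Definition no_zero_rows_cols (S : eqType) (m n : nat) (X : smat S) : Prop :=
  (forall i, i < m -> exists2 j, j < n & X i j != [::]) /\
  (forall j, j < n -> exists2 i, i < m & X i j != [::]).

Definition no_repeat (S : eqType) (m n : nat) (X : smat S) : Prop :=
  (forall i j, i < m -> j < n -> uniq (X i j)) /\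
  (forall j, j < n -> uniq (flatten [seq X i j | i <- iota 0 m])).

Definition smbisystem (Sm Sp : eqType) (m : nat -> nat)
    (Mm : nat -> smat Sm) (Mp : nat -> smat Sp) : Prop :=
  forall l,
    no_zero_rows_cols (m l) (m l.+1) (Mm l) /\
    no_zero_rows_cols (m l) (m l.+1) (Mp l) /\
    no_repeat (m l) (m l.+1) (Mm l) /\
    no_repeat (m l) (m l.+1) (Mp l) /\
    spec_eq (@kspec Sm Sp) (m l) (m l.+2) (mulm (m l.+1) (Mm l) (Mp l.+1))
                           (m l) (m l.+2) (mulm (m l.+1) (Mp l) (Mm l.+1)).

Fixpoint wprod (S : Type) (m : nat -> nat) (M : nat -> smat S) (l k : nat)
    : smat (seq S) :=
  match k with
  | 0 => fun i j => if i == j then [:: [::]] else [::]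
  | k'.+1 => fun i j =>
      flatten [seq [seq rcons w a | w <- wprod m M l k' i h, a <- M (l + k') h j]
              | h <- iota 0 (m (l + k'))]
  end.

(* FPCC (for a bisystem over a single alphabet S = Sigma^- = Sigma^+). *)
Definition FPCC (S : eqType) (m : nat -> nat) (Mm Mp : nat -> smat S) : Prop :=
  m 0 = 1 /\
  forall l j, 1 <= l -> j < m l ->
    forall i, i < m 0 ->
    forall w : seq S, (w \in wprod m Mm 0 l i j) = (rev w \in wprod m Mp 0 l i j).

Definition fpcc_bisystem (S : eqType) (m : nat -> nat) (Mm Mp : nat -> smat S)
  : Prop := smbisystem m Mm Mp /\ FPCC m Mm Mp.

Definition block (S : Type) (x : int -> S) (i : int) (n : nat) : seq S :=
  [seq x (i + k%:Z)%R | k <- iota 0 n].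

Definition shift (S : Type) (x : int -> S) : int -> S := fun i => x (i + 1)%R.

Definition presented_lang (S : eqType) (m : nat -> nat) (Mp : nat -> smat S)
    (w : seq S) : Prop :=
  w != [::] /\
  exists l k i j, [/\ 0 < k, i < m l, j < m (l + k) & w \in wprod m Mp l k i j].

Definition Lambda (S : eqType) (m : nat -> nat) (Mp : nat -> smat S)
    (x : int -> S) : Prop :=
  forall i n, 0 < n -> presented_lang m Mp (block x i n).

(* Continuity for the product topology on S^Z (S discrete), relative   *)
(* to the subspaces X, Y.                                               *)
Definition agree_on (S : Type) (K : nat) (x y : int -> S) : Prop :=
  forall i : int, (absz i <= K)%N -> x i = y i.

Definition cont_on (S T : Type) (X : (int -> S) -> Prop)
    (f : (int -> S) -> (int -> T)) : Prop :=
  forall x, X x -> forall N, exists K, forall y, X y ->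
    agree_on K y x -> agree_on N (f y) (f x).

Definition top_conjugate (S T : Type) (X : (int -> S) -> Prop)
    (Y : (int -> T) -> Prop) : Prop :=
  exists (f : (int -> S) -> (int -> T)) (g : (int -> T) -> (int -> S)),
    (forall x, X x -> Y (f x)) /\
    (forall y, Y y -> X (g y)) /\
    (forall x, X x -> forall i, g (f x) i = x i) /\
    (forall y, Y y -> forall i, f (g y) i = y i) /\
    cont_on X f /\ cont_on Y g /\
    (forall x, X x -> forall i, f (shift x) i = shift (f x) i).

Record fsys := FSys {
  fs_alph : finType;
  fs_dim : nat -> nat;
  fs_minus : nat -> smat fs_alph;
  fs_plus : nat -> smat fs_alph }.

Definition is_fpcc (s : fsys) : Prop :=
  fpcc_bisystem (fs_dim s) (fs_minus s) (fs_plus s).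

Definition kcomp (A B C : Type) (phi : A -> option (B * C)) : A -> option (C * B) :=
  fun a => omap (@kappa B C) (phi a).

(* Properly strong shift equivalence in 1-step.  X l and Y l have      *)
(* dimensions d(l) x d(l+1) / c(l) x c(l+1) according to parity.       *)
Definition psse1 (s t : fsys) : Prop :=
  let m := fs_dim s in let n := fs_dim t in
  let Mm := fs_minus s in let Mp := fs_plus s in
  let Nm := fs_minus t in let Np := fs_plus t in
  exists (C D : finType)
         (phi : fs_alph s -> option (C * D)) (psi : fs_alph t -> option (D * C))
         (c d : nat -> nat)
         (P : nat -> smat C) (Q : nat -> smat D)
         (X : nat -> smat D) (Y : nat -> smat C),
    spec_inj phi /\ spec_inj psi /\
    forall l,
      let e := l.*2 in
      spec_eq phi (m l) (m l.+1) (Mp l)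
                      (c e) (c e.+2) (mulm (d e.+1) (P e) (Q e.+1)) /\
          spec_eq psi (n l) (n l.+1) (Np l)
                      (d e) (d e.+2) (mulm (c e.+1) (Q e) (P e.+1)) /\
          spec_eq (kcomp phi) (m l) (m l.+1) (Mm l)
                      (c e) (c e.+2) (mulm (c e.+1) (X e) (Y e.+1)) /\
          spec_eq (kcomp psi) (n l) (n l.+1) (Nm l)
                      (d e) (d e.+2) (mulm (d e.+1) (Y e) (X e.+1)) /\
          spec_eq (@kspec C C) (c e.+1) (d e.+3) (mulm (c e.+2) (Y e.+1) (P e.+2))
                      (c e.+1) (d e.+3) (mulm (d e.+2) (P e.+1) (Y e.+2)) /\
          spec_eq (@kspec D D) (d e.+1) (c e.+3) (mulm (d e.+2) (X e.+1) (Q e.+2))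
                      (d e.+1) (c e.+3) (mulm (c e.+2) (Q e.+1) (X e.+2)) /\
          spec_eq (@kspec D C) (c e) (d e.+2) (mulm (c e.+1) (X e) (P e.+1))
                      (c e) (d e.+2) (mulm (d e.+1) (P e) (X e.+1)) /\
          spec_eq (@kspec C D) (d e) (c e.+2) (mulm (d e.+1) (Y e) (Q e.+1))
                      (d e) (c e.+2) (mulm (c e.+1) (Q e) (Y e.+1)).

Definition psse_step (s t : fsys) : Prop := [/\ is_fpcc s, is_fpcc t & psse1 s t].

Definition psse (s t : fsys) : Prop := clos_refl_sym_trans fsys psse_step s t.

From HB Require Import structures.
From mathcomp Require Import all_boot all_order all_algebra.
From mathcomp Require Import zify.
From Stdlib Require Import Relations FunctionalExtensionality.
Set Implicit Arguments. Unset Strict Implicit. Unset Printing Implicit Defensive.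

(* Topological conjugacy of shift-invariant subshifts is an equivalence
   relation, so it suffices to treat one properly strong shift equivalence
   step  M^+ ~ P Q,  N^+ ~ Q P.  Writing  phi(x_i) = c_i d_i  for a point x of
   Lambda_M, the conjugacy regroups the bi-infinite sequence
   ... c_i d_i c_(i+1) d_(i+1) ...  into the blocks  d_i c_(i+1) = psi(y_i),
   which only looks at x_i and x_(i+1); the inverse regroups back and shifts.
   The real work is to show that the regrouped point lies in Lambda_N: a word
   of x read along a path of  P_(2l) Q_(2l+1) P_(2l+2) ...  yields a path in
   Q_(2l+1) P_(2l+2) ..., of the wrong parity for N^+; using the commutation
   relations  Y Q ~ Q Y  and  Y P ~ P Y  this path is lifted to one through
   Q_(2l+2) P_(2l+3) ...  =  N^+_(l+1) ..., provided it starts at a nonzero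
   entry of Y, which the nonzero columns of M^- = X Y provide. *)

Lemma mulmP (A B : eqType) (n : nat) (X : smat A) (Y : smat B) i k a b :
  (a, b) \in mulm n X Y i k <-> exists h, [/\ h < n, a \in X i h & b \in Y h k].
Proof.
rewrite /mulm; split.
- case/flatten_mapP => h; rewrite mem_iota /= => Hh.
  by case/allpairsP => -[a' b'] /= [Ha Hb [-> ->]]; exists h.
- case=> h [Hh Ha Hb]; apply/flatten_mapP; exists h; first by rewrite mem_iota.
  by apply/allpairsP; exists (a, b).
Qed.

Section Specifications.
Variables (A B : eqType) (phi : A -> option B).
Variables (m n m' n' : nat) (X : smat A) (Y : smat B).
Hypothesis XY : spec_eq phi m n X m' n' Y.

Lemma spec_eq_dims : m = m' /\ n = n'.
Proof. by case: XY => -> [-> _]. Qed.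

Lemma spec_eq_image i j a : i < m -> j < n -> a \in X i j ->
  exists2 b, phi a = Some b & b \in Y i j.
Proof.
case: XY => _ [_ H] Hi Hj Ha; have [/allP Hall Hp] := H i j Hi Hj.
move: (Hall a Ha); case E: (phi a) => [b|] //= _; exists b => //.
by rewrite -(perm_mem Hp) mem_pmap -E map_f.
Qed.

Lemma spec_eq_preimage i j b : i < m -> j < n -> b \in Y i j ->
  exists2 a, a \in X i j & phi a = Some b.
Proof.
case: XY => _ [_ H] Hi Hj; have [_ Hp] := H i j Hi Hj.
by rewrite -(perm_mem Hp) mem_pmap => /mapP [a Ha E]; exists a.
Qed.

End Specifications.

Lemma bounded_choice (P : nat -> nat -> bool) (B : nat -> nat) K :
  (forall t, t < K -> exists2 h, h < B t & P t h) ->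
  exists g, forall t, t < K -> g t < B t /\ P t (g t).
Proof.
move=> H; exists (fun t => find (P t) (iota 0 (B t))) => t /H [h Hh Ph].
have Hex : has (P t) (iota 0 (B t)) by apply/hasP; exists h; rewrite ?mem_iota.
have Hlt := Hex; rewrite has_find size_iota in Hlt.
by split=> //; have := nth_find 0 Hex; rewrite nth_iota.
Qed.

Section WordProducts.
Variables (A : eqType) (m : nat -> nat) (M : nat -> smat A).

Lemma wprod_path l K i j w a0 :
  i < m l -> j < m (l + K) -> w \in wprod m M l K i j ->
  size w = K /\ exists v, [/\ v 0 = i, v K = j &
    forall t, t < K -> [/\ v t < m (l + t), v t.+1 < m (l + t.+1) &
                          nth a0 w t \in M (l + t) (v t) (v t.+1)]].
Proof.
move=> Hi; elim: K j w => [|K IH] j w Hj /=.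
  by case: eqP => [<-|] //; rewrite inE => /eqP ->; split => //; exists (fun _ => i).
case/flatten_mapP => h; rewrite mem_iota /= => Hh.
case/allpairsP => -[w' a] /= [Hw' Ha ->].
have [Hs [v [Hv0 HvK Hv]]] := IH h w' Hh Hw'.
rewrite size_rcons Hs; split => //.
exists (fun t => if t == K.+1 then j else v t); split => //; first by rewrite eqxx.
move=> t; rewrite ltnS leq_eqVlt => /orP [/eqP ->|Ht].
  by rewrite eqxx (ltn_eqF (ltnSn K)) HvK nth_rcons Hs ltnn eqxx.
have [H1 H2 H3] := Hv t Ht; rewrite (ltn_eqF (ltn_trans Ht (ltnSn K))).
by rewrite eqSS (ltn_eqF Ht) nth_rcons Hs Ht.
Qed.

Lemma path_wprod l K (s : nat -> A) v :
  v 0 < m l ->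
  (forall t, t < K -> [/\ v t < m (l + t), v t.+1 < m (l + t.+1) &
                          s t \in M (l + t) (v t) (v t.+1)]) ->
  map s (iota 0 K) \in wprod m M l K (v 0) (v K).
Proof.
move=> H0; elim: K => [|K IH] H /=; first by rewrite eqxx inE.
have [HvK _ HsK] := H K (ltnSn K).
apply/flatten_mapP; exists (v K); first by rewrite mem_iota.
apply/allpairsP; exists (map s (iota 0 K), s K) => /=; split => //.
- by apply: IH => t Ht; apply: H; apply: ltnW.
- change (map s (iota 0 K.+1) = rcons (map s (iota 0 K)) (s K)).
  by rewrite -map_rcons -cats1 -addn1 iotaD.
Qed.

End WordProducts.

Lemma Lambda_shift (S : eqType) (m : nat -> nat) (Mp : nat -> smat S) x :
  Lambda m Mp x -> Lambda m Mp (shift x).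
Proof.
move=> Hx i k Hk; have := Hx (i + 1)%R k Hk.
by congr presented_lang; apply: eq_map => t; rewrite /shift; congr x; lia.
Qed.

Lemma Lambda_unshift (S : eqType) (m : nat -> nat) (Mp : nat -> smat S) x :
  Lambda m Mp x -> Lambda m Mp (fun i => x (i - 1)%R).
Proof.
move=> Hx i k Hk; have := Hx (i - 1)%R k Hk.
by congr presented_lang; apply: eq_map => t; congr x; lia.
Qed.

(* Topological conjugacy is an equivalence relation (symmetry needs shift
   invariance, to commute the inverse map with the shift). *)
Lemma top_conjugate_refl (S : Type) (Z : (int -> S) -> Prop) : top_conjugate Z Z.
Proof.
have cont_id : cont_on Z id by move=> x _ N; exists N.
by exists id, id; do !split.
Qed.

Lemma top_conjugate_sym (S T : Type) (X : (int -> S) -> Prop) (Y : (int -> T) -> Prop) :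
  (forall x, X x -> X (shift x)) -> top_conjugate X Y -> top_conjugate Y X.
Proof.
move=> Xshift [f [g [fX [gY [gf [fg [fc [gc fshift]]]]]]]].
exists g, f; do 6!split => //; move=> y Hy i.
have Ey : shift y = f (shift (g y)).
  by apply: functional_extensionality => j; rewrite fshift; [rewrite /shift fg | exact: gY].
by rewrite Ey gf //; apply/Xshift/gY.
Qed.

Lemma top_conjugate_trans (S T U : Type) (X : (int -> S) -> Prop)
    (Y : (int -> T) -> Prop) (Z : (int -> U) -> Prop) :
  top_conjugate X Y -> top_conjugate Y Z -> top_conjugate X Z.
Proof.
move=> [f1 [g1 [fX1 [gY1 [gf1 [fg1 [fc1 [gc1 fs1]]]]]]]].
move=> [f2 [g2 [fX2 [gY2 [gf2 [fg2 [fc2 [gc2 fs2]]]]]]]].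
exists (f2 \o f1), (g1 \o g2); do !split => /=.
- by move=> x Hx; apply/fX2/fX1.
- by move=> z Hz; apply/gY1/gY2.
- move=> x Hx i; have -> : g2 (f2 (f1 x)) = f1 x.
    by apply: functional_extensionality => j; apply/gf2/fX1.
  exact: gf1.
- move=> z Hz i; have -> : f1 (g1 (g2 z)) = g2 z.
    by apply: functional_extensionality => j; apply/fg1/gY2.
  exact: fg2.
- move=> x Hx N; have [K2 HK2] := fc2 (f1 x) (fX1 x Hx) N.
  have [K1 HK1] := fc1 x Hx K2; exists K1 => y Hy Hag.
  by apply: HK2; [apply: fX1 | apply: HK1].
- move=> z Hz N; have [K2 HK2] := gc1 (g2 z) (gY2 z Hz) N.
  have [K1 HK1] := gc2 z Hz K2; exists K1 => y Hy Hag.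
  by apply: HK2; [apply: gY2 | apply: HK1].
- move=> x Hx i; have -> : f1 (shift x) = shift (f1 x).
    by apply: functional_extensionality => j; apply: fs1.
  exact/fs2/fX1.
Qed.

Section Regrouping.
Variables (S T C D : finType).
Variables (phi : S -> option (C * D)) (psi : T -> option (D * C)).

(* The regrouping map: if  phi(x_i) = c_i d_i, its value at i is the symbol b
   with  psi(b) = d_i c_(i+1)  (t0 is an irrelevant default). *)
Definition regroup (t0 : T) (x : int -> S) (i : int) : T :=
  match phi (x i), phi (x (i + 1)%R) with
  | Some (_, d1), Some (c2, _) =>
      if [pick b | psi b == Some (d1, c2)] is Some b then b else t0
  | _, _ => t0
  end.

(* x and y describe the same sequence  ... c_i d_i c_(i+1) ...  grouped as
   phi(x_i) = c_i d_i  and  psi(y_i) = d_i c_(i+1). *)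
Definition interleaved_at (x : int -> S) (y : int -> T) (i : int) : Prop :=
  exists c1 d1 c2 d2, [/\ phi (x i) = Some (c1, d1),
    phi (x (i + 1)%R) = Some (c2, d2) & psi (y i) = Some (d1, c2)].

Definition interleaved (x : int -> S) (y : int -> T) : Prop :=
  forall i, interleaved_at x y i.

Lemma regroupE t0 x i c1 d1 c2 d2 b : spec_inj psi ->
  phi (x i) = Some (c1, d1) -> phi (x (i + 1)%R) = Some (c2, d2) ->
  psi b = Some (d1, c2) -> regroup t0 x i = b.
Proof.
move=> psi_inj E1 E2 Eb; rewrite /regroup E1 E2.
case: pickP => [b' /eqP Eb'|/(_ b)]; first exact: psi_inj Eb' Eb.
by rewrite Eb eqxx.
Qed.

Lemma interleaved_regroup t0 x y i : spec_inj psi ->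
  interleaved_at x y i -> regroup t0 x i = y i.
Proof. by move=> psi_inj [c1 [d1 [c2 [d2 [E1 E2 E3]]]]]; exact: regroupE E1 E2 E3. Qed.

(* Regrouping reads only the coordinates i and i + 1. *)
Lemma regroup_cont t0 (Z : (int -> S) -> Prop) : cont_on Z (regroup t0).
Proof.
move=> x _ N; exists N.+1 => y _ Hag i Hi.
by rewrite /regroup !Hag //; lia.
Qed.

(* The inverse conjugacy, regrouping followed by unshifting, reads only the
   coordinates i - 1 and i. *)
Lemma regroup_unshift_cont t0 (Z : (int -> S) -> Prop) :
  cont_on Z (fun x i => regroup t0 x (i - 1)%R).
Proof.
move=> x _ N; exists N.+1 => y _ Hag i Hi.
by rewrite /regroup !Hag //; lia.
Qed.

Lemma regroup_unshift t0 x i :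
  regroup t0 (fun j => x (j - 1)%R) i = regroup t0 x (i - 1)%R.
Proof. by rewrite /regroup (_ : (i + 1 - 1 = i - 1 + 1)%R) //; lia. Qed.

End Regrouping.

Lemma interleaved_swap (S T C D : finType) (phi : S -> option (C * D))
    (psi : T -> option (D * C)) x y :
  interleaved phi psi x y -> interleaved psi phi y (fun i => x (i + 1)%R).
Proof.
move=> Hxy i; have [c1 [d1 [c2 [d2 [_ E2 E3]]]]] := Hxy i.
have [c3 [d3 [c4 [d4 [F1 F2 F3]]]]] := Hxy (i + 1)%R.
rewrite F1 in E2; case: E2 => Ec _; subst c3.
by exists d1, c2, d3, c4.
Qed.

Section RegroupIntoLambda.
Variables (S T C D : finType).
Variables (m n c d : nat -> nat) (Mm Mp : nat -> smat S) (Np : nat -> smat T).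
Variables (phi : S -> option (C * D)) (psi : T -> option (D * C)).
Variables (P : nat -> smat C) (Q : nat -> smat D) (X : nat -> smat D) (Y : nat -> smat C).
Variable t0 : T.
Hypothesis psi_inj : spec_inj psi.
Hypothesis Mm_col : forall l j, j < m l.+1 -> exists2 i, i < m l & Mm l i j != [::].
Hypothesis Mp_PQ : forall l, spec_eq phi (m l) (m l.+1) (Mp l) (c l.*2) (c l.*2.+2)
   (mulm (d l.*2.+1) (P l.*2) (Q l.*2.+1)).
Hypothesis Np_QP : forall l, spec_eq psi (n l) (n l.+1) (Np l) (d l.*2) (d l.*2.+2)
   (mulm (c l.*2.+1) (Q l.*2) (P l.*2.+1)).
Hypothesis Mm_XY : forall l, spec_eq (kcomp phi) (m l) (m l.+1) (Mm l) (c l.*2) (c l.*2.+2)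
   (mulm (c l.*2.+1) (X l.*2) (Y l.*2.+1)).
Hypothesis YP_PY : forall l, spec_eq (@kspec C C) (c l.*2.+1) (d l.*2.+3)
   (mulm (c l.*2.+2) (Y l.*2.+1) (P l.*2.+2)) (c l.*2.+1) (d l.*2.+3)
   (mulm (d l.*2.+2) (P l.*2.+1) (Y l.*2.+2)).
Hypothesis YQ_QY : forall l, spec_eq (@kspec C D) (d l.*2) (c l.*2.+2)
   (mulm (d l.*2.+1) (Y l.*2) (Q l.*2.+1)) (d l.*2) (c l.*2.+2)
   (mulm (c l.*2.+1) (Q l.*2) (Y l.*2.+1)).

Lemma factor_window x i k : Lambda m Mp x -> 0 < k ->
  exists l (v g : nat -> nat) (cc : nat -> C) (dd : nat -> D),
  forall t, t < k -> [/\ phi (x (i + t%:Z)%R) = Some (cc t, dd t),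
     v t.+1 < c (l + t).*2.+2, g t < d (l + t).*2.+1,
     cc t \in P (l + t).*2 (v t) (g t) & dd t \in Q (l + t).*2.+1 (g t) (v t.+1)].
Proof.
move=> Hx k_gt0; have [_ [l [K [i0 [j [_ Hi0 Hj Hw]]]]]] := Hx i k k_gt0.
have [HK [v [_ _ Hv]]] := wprod_path (x 0) Hi0 Hj Hw.
rewrite size_map size_iota in HK; subst K.
have Hfac t : t < k -> exists p, [/\ phi (x (i + t%:Z)%R) = Some p,
    p \in mulm (d (l + t).*2.+1) (P (l + t).*2) (Q (l + t).*2.+1) (v t) (v t.+1)
  & v t.+1 < c (l + t).*2.+2].
  move=> Ht; have [Hvt Hvt1 Hxt] := Hv t Ht.
  rewrite addnS in Hvt1; rewrite /block (nth_map 0) ?size_iota // in Hxt.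
  rewrite nth_iota // add0n in Hxt; have [_ <-] := spec_eq_dims (Mp_PQ (l + t)).
  by have [p Ep Hp] := spec_eq_image (Mp_PQ (l + t)) Hvt Hvt1 Hxt; exists p.
have [[c0 d0] _] := Hfac 0 k_gt0.
pose cc t := (odflt (c0, d0) (phi (x (i + t%:Z)%R))).1.
pose dd t := (odflt (c0, d0) (phi (x (i + t%:Z)%R))).2.
have Hmid t : t < k -> exists2 h, h < d (l + t).*2.+1 &
    (cc t \in P (l + t).*2 (v t) h) && (dd t \in Q (l + t).*2.+1 h (v t.+1)).
  move=> /Hfac [[c1 d1] [Ep /mulmP [h [Hh Hc Hd]]] _].
  by exists h => //; rewrite /cc /dd Ep Hc Hd.
have [g Hg] := bounded_choice Hmid.
exists l, v, g, cc, dd => t Ht; have [[c1 d1] [Ep _ Hv1]] := Hfac t Ht.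
by have [Hgt /andP [Hc Hd]] := Hg t Ht; move: Hc Hd; rewrite /cc /dd Ep.
Qed.

(* A nonzero column of  M^-_l ~ X Y,  pushed through  Y P ~ P Y, provides a
   nonzero entry of  Y_(2l+2)  ending at any vertex where a P_(2l+2)-step
   starts from column v1. *)
Lemma Y_entry_from_column l v1 g1 c1 :
  v1 < c l.*2.+2 -> g1 < d l.*2.+3 -> c1 \in P l.*2.+2 v1 g1 ->
  exists2 u, u < d (l.+1).*2 & Y (l.+1).*2 u g1 != [::].
Proof.
move=> Hv1 Hg1 Hc1; have [_ Em] := spec_eq_dims (Mp_PQ l).
have Hv1' : v1 < m l.+1 by rewrite Em.
have [r Hr] := Mm_col Hv1'; case E: (Mm l r v1) => [|a as'] // _.
have Ha : a \in Mm l r v1 by rewrite E inE eqxx.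
have [[dv cv] _ /mulmP [h [Hh _ Hcv]]] := spec_eq_image (Mm_XY l) Hr Hv1' Ha.
have Hm : (cv, c1) \in mulm (c l.*2.+2) (Y l.*2.+1) (P l.*2.+2) h g1.
  by apply/mulmP; exists v1.
have [p [<-] /mulmP [u [Hu _ Hyu]]] := spec_eq_image (YP_PY l) Hh Hg1 Hm.
by exists u; rewrite doubleS //; apply/eqP => E0; rewrite E0 in Hyu.
Qed.

(* Lifting: a path  Q_(2L+1) P_(2L+2) Q_(2L+3) ...  (vertices g, v) starting
   at a nonzero entry  Y_(2L) u (g 0)  is transported along  Y Q ~ Q Y  and
   Y P ~ P Y  to a path  Q_(2L) P_(2L+1) Q_(2L+2) ...  from u carrying the
   same symbols; the invariant is that  Y_(2(L+t)) (w t) (g t)  is nonzero. *)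
Lemma lift_path L k (cc : nat -> C) (dd : nat -> D) (g v : nat -> nat) u :
  (forall t, t < k -> [/\ g t < d (L + t).*2.+1, v t.+1 < c (L + t).*2.+2,
     g t.+1 < d (L + t).*2.+3, dd t \in Q (L + t).*2.+1 (g t) (v t.+1)
   & cc t.+1 \in P (L + t).*2.+2 (v t.+1) (g t.+1)]) ->
  u < d L.*2 -> Y L.*2 u (g 0) != [::] ->
  exists w, [/\ w 0 = u, w k < d (L + k).*2, Y (L + k).*2 (w k) (g k) != [::] &
    forall t, t < k -> [/\ w t < d (L + t).*2, w t.+1 < d (L + t).*2.+2 &
      exists2 z, z < c (L + t).*2.+1 &
        (dd t \in Q (L + t).*2 (w t) z) /\ (cc t.+1 \in P (L + t).*2.+1 z (w t.+1))]].
Proof.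
elim: k => [|k IH] Hpath Hu HY; first by exists (fun _ => u); rewrite addn0.
have [w [Hw0 Hwk HYk Hw]] := IH (fun t Ht => Hpath t (ltnW Ht)) Hu HY.
have [Hg Hv Hg' Hdd Hcc] := Hpath k (ltnSn k).
case E: (Y (L + k).*2 (w k) (g k)) HYk => [|y ys] // _.
have Hy : y \in Y (L + k).*2 (w k) (g k) by rewrite E inE eqxx.
have HYQ : (y, dd k) \in mulm (d (L + k).*2.+1) (Y (L + k).*2) (Q (L + k).*2.+1)
    (w k) (v k.+1) by apply/mulmP; exists (g k).
have [_ [<-] /mulmP [z [Hz Hq Hy1]]] := spec_eq_image (YQ_QY (L + k)) Hwk Hv HYQ.
have HYP : (y, cc k.+1) \in mulm (c (L + k).*2.+2) (Y (L + k).*2.+1) (P (L + k).*2.+2)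
    z (g k.+1) by apply/mulmP; exists (v k.+1).
have [_ [<-] /mulmP [w1 [Hw1 Hp Hy2]]] := spec_eq_image (YP_PY (L + k)) Hz Hg' HYP.
exists (fun t => if t == k.+1 then w1 else w t); rewrite eqxx addnS doubleS.
split => //; first by apply/eqP => E0; rewrite E0 in Hy2.
move=> t; rewrite ltnS leq_eqVlt => /orP [/eqP ->|Ht].
  by rewrite eqxx (ltn_eqF (ltnSn k)); split => //; exists z.
by rewrite (ltn_eqF (ltn_trans Ht (ltnSn k))) eqSS (ltn_eqF Ht); apply: Hw.
Qed.

Lemma regroup_window x i k : Lambda m Mp x -> exists L w, w 0 < n L /\
  forall t, t < k -> [/\ w t < n (L + t), w t.+1 < n (L + t.+1),
     regroup phi psi t0 x (i + t%:Z)%R \in Np (L + t) (w t) (w t.+1) &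
     interleaved_at phi psi x (regroup phi psi t0 x) (i + t%:Z)%R].
Proof.
move=> Hx; have [l [v [g [cc [dd Hf]]]]] := factor_window (i - 1)%R Hx (isT : 0 < k.+2).
have [_ Hv1 _ _ _] := Hf 0 isT; have [_ _ Hg1 Hc1 _] := Hf 1 isT.
rewrite addn0 in Hv1; rewrite addn1 doubleS in Hg1 Hc1.
have [u Hu HY] := Y_entry_from_column Hv1 Hg1 Hc1.
have Hsteps t : t < k -> [/\ g t.+1 < d (l.+1 + t).*2.+1,
    v t.+2 < c (l.+1 + t).*2.+2, g t.+2 < d (l.+1 + t).*2.+3,
    dd t.+1 \in Q (l.+1 + t).*2.+1 (g t.+1) (v t.+2)
  & cc t.+2 \in P (l.+1 + t).*2.+2 (v t.+2) (g t.+2)].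
  move=> Ht; have [_ Hv2 Hgt1 _ Hd] := Hf t.+1 (leq_trans Ht (leqnSn _)).
  have [_ _ Hgt2 Hc _] := Hf t.+2 Ht.
  by move: Hv2 Hgt1 Hd Hgt2 Hc; rewrite !addSn !addnS !doubleS.
have [w [Hw0 _ _ Hw]] := @lift_path l.+1 k (fun t => cc t.+1) (fun t => dd t.+1)
  (fun t => g t.+1) (fun t => v t.+1) u Hsteps Hu HY.
have [En0 _] := spec_eq_dims (Np_QP l.+1).
exists l.+1, w; split; first by rewrite En0 Hw0.
move=> t Ht; have [Hwt Hwt1 [z Hz [Hq Hp]]] := Hw t Ht.
have [En1 En2] := spec_eq_dims (Np_QP (l.+1 + t)).
have HQP : (dd t.+1, cc t.+2) \in mulm (c (l.+1 + t).*2.+1) (Q (l.+1 + t).*2)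
    (P (l.+1 + t).*2.+1) (w t) (w t.+1) by apply/mulmP; exists z.
rewrite -En1 in Hwt; rewrite -En2 in Hwt1.
have [b Hb Eb] := spec_eq_preimage (Np_QP (l.+1 + t)) Hwt Hwt1 HQP.
have [E1 _ _ _ _] := Hf t.+1 (leq_trans Ht (leqnSn _)).
have [E2 _ _ _ _] := Hf t.+2 Ht.
have Ex1 : x (i + t%:Z)%R = x (i - 1 + t.+1%:Z)%R by congr x; lia.
have Ex2 : x (i + t%:Z + 1)%R = x (i - 1 + t.+2%:Z)%R by congr x; lia.
rewrite -Ex1 in E1; rewrite -Ex2 in E2.
have Er : regroup phi psi t0 x (i + t%:Z)%R = b by exact: regroupE E1 E2 Eb.
split; [by [] | by rewrite addnS | by rewrite Er |].
by exists (cc t.+1), (dd t.+1), (cc t.+2), (dd t.+2); rewrite Er.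
Qed.

Lemma regroup_Lambda x : Lambda m Mp x -> Lambda n Np (regroup phi psi t0 x).
Proof.
move=> Hx i k k_gt0; have [L [w [Hw0 Hw]]] := regroup_window i k Hx.
split; first by rewrite /block -size_eq0 size_map size_iota -lt0n.
exists L, k, (w 0), (w k); split => //.
  by case: k k_gt0 Hw => // k _ Hw; have [_ Hwk _ _] := Hw k (ltnSn k).
by apply: path_wprod => // t /Hw [].
Qed.

Lemma regroup_interleaved x : Lambda m Mp x ->
  interleaved phi psi x (regroup phi psi t0 x).
Proof.
move=> Hx i; have [L [w [_ Hw]]] := regroup_window i 1 Hx.
by have [_ _ _] := Hw 0 isT; rewrite (_ : (i + 0%:Z)%R = i) //; lia.
Qed.

End RegroupIntoLambda.

(* FPCC bisystems have nonempty alphabets (m(0) = 1 and M^+_(0,1) has a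
   nonzero row), and M^- has no zero columns; the former provides default
   symbols for regrouping, the latter the start of the lifting argument. *)
Lemma fpcc_alphabet_inhabited (s : fsys) : is_fpcc s -> inhabited (fs_alph s).
Proof.
case=> Hbi [Hdim0 _]; have [_ [[Hrows _] _]] := Hbi 0.
have [j _] := Hrows 0 (ltac:(by rewrite Hdim0)).
by case: (fs_plus s 0 0 j) => [|a _] //; exists.
Qed.

Lemma fpcc_minus_columns (s : fsys) : is_fpcc s ->
  forall l j, j < fs_dim s l.+1 -> exists2 i, i < fs_dim s l & fs_minus s l i j != [::].
Proof. by move=> [Hbi _] l; have [[_ Hcols] _] := Hbi l. Qed.

(* One step: regrouping is a conjugacy, with inverse "regroup back and
   unshift"; both composites are the identity by interleaving. *)
Lemma psse_step_conjugate (s t : fsys) : psse_step s t ->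
  top_conjugate (Lambda (fs_dim s) (fs_plus s)) (Lambda (fs_dim t) (fs_plus t)).
Proof.
case=> Hs Ht [C [D [phi [psi [c [d [P [Q [X [Y [phi_inj [psi_inj H]]]]]]]]]]]].
have Mp_PQ l := (H l).1; have Np_QP l := (H l).2.1.
have Mm_XY l := (H l).2.2.1; have Nm_YX l := (H l).2.2.2.1.
have YP_PY l := (H l).2.2.2.2.1; have XQ_QX l := (H l).2.2.2.2.2.1.
have XP_PX l := (H l).2.2.2.2.2.2.1; have YQ_QY l := (H l).2.2.2.2.2.2.2.
have [s0] := fpcc_alphabet_inhabited Hs; have [t0] := fpcc_alphabet_inhabited Ht.
have Mcol := fpcc_minus_columns Hs; have Ncol := fpcc_minus_columns Ht.
have fL := regroup_Lambda t0 psi_inj Mcol Mp_PQ Np_QP Mm_XY YP_PY YQ_QY.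
have fI := regroup_interleaved t0 psi_inj Mcol Mp_PQ Np_QP Mm_XY YP_PY YQ_QY.
have gL := regroup_Lambda s0 phi_inj Ncol Np_QP Mp_PQ Nm_YX XQ_QX XP_PX.
have gI := regroup_interleaved s0 phi_inj Ncol Np_QP Mp_PQ Nm_YX XQ_QX XP_PX.
exists (regroup phi psi t0), (fun y i => regroup psi phi s0 y (i - 1)%R).
split; [exact: fL | split; [|split; [|split; [|split; [|split]]]]].
- by move=> y Hy; apply/Lambda_unshift/gL.
- move=> x Hx i; rewrite (interleaved_regroup _ phi_inj (interleaved_swap (fI x Hx) _)).
  by congr x; lia.
- move=> y Hy i; rewrite regroup_unshift.
  rewrite (interleaved_regroup _ psi_inj (interleaved_swap (gI y Hy) _)).
  by congr y; lia.
- exact: regroup_cont.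
- exact: regroup_unshift_cont.
- by [].
Qed.

Lemma psse_conjugate (s t : fsys) : psse s t ->
  top_conjugate (Lambda (fs_dim s) (fs_plus s)) (Lambda (fs_dim t) (fs_plus t)).
Proof.
elim=> [x y /psse_step_conjugate //|x|x y _ IH|x y z _ IH1 _ IH2].
- exact: top_conjugate_refl.
- by apply: top_conjugate_sym IH => u; apply: Lambda_shift.
- exact: top_conjugate_trans IH1 IH2.
Qed.

Theorem theorem6p14 (S T : finType)
    (m : nat -> nat) (Mm Mp : nat -> smat S)
    (n : nat -> nat) (Nm Np : nat -> smat T) :
  fpcc_bisystem m Mm Mp ->
  fpcc_bisystem n Nm Np ->
  psse (FSys m Mm Mp) (FSys n Nm Np) ->
  top_conjugate (Lambda m Mp) (Lambda n Np).
Proof. by move=> _ _ /psse_conjugate. Qed.
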